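(* Let $\{(\mathbf{x}^{(i)},y^{(i)})\}_{i=1}^n$ with $\|\mathbf{x}^{(i)}\|_2\le1$, $y^{(i)}\in\{-1,1\}$, and suppose there is $\mathbf{w}^*$ with $\|\mathbf{w}^*\|_2=1$ and $\min_iy^{(i)}\mathbf{x}^{(i)\top}\mathbf{w}^*=\gamma>0$. Let $A$ have rows $y^{(i)}\mathbf{x}^{(i)\top}$ and $\alpha_t=t$. Let $\mathbf{v}_T$ be produced by the Accelerated Perceptron: $\mathbf{q}_0=\tfrac{\mathbf{1}}{n}$, $\mathbf{v}_0=\mathbf{g}_0=\mathbf{0}$, and for $t=1,\dots,T$: $\mathbf{v}_t=\mathbf{v}_{t-1}-\frac{t}{2(t+1)}(\mathbf{g}_{t-1}-A^{\top}\mathbf{q}_{t-1})$, $q_{t,i}=\frac{\exp(-y^{(i)}\mathbf{v}_t^{\top}\mathbf{x}^{(i)})}{\sum_j\exp(-y^{(j)}\mathbf{v}_t^{\top}\mathbf{x}^{(j)})}$, $\mathbf{g}_t=\frac{t}{t+1}(\mathbf{g}_{t-1}-A^{\top}\mathbf{q}_t)$. Let also the game dynamics be: $g(\mathbf{w},\mathbf{p})=\mathbf{p}^{\top}A\mathbf{w}-\tfrac12\|\mathbf{w}\|_2^2$, $\mathbf{p}_0=\tfrac{\mathbf{1}}{n}$, $h_j(\mathbf{w})=-g(\mathbf{w},\mathbf{p}_j)$, $\ell_j(\mathbf{p})=g(\mathbf{w}_j,\mathbf{p})$, $\mathbf{w}_t=\arg\min_{\mathbf{w}\in\mathbb{R}^d}\sum_{j=1}^{t-1}\alpha_jh_j(\mathbf{w})+\alpha_th_{t-1}(\mathbf{w})$,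 $\mathbf{p}_t=\arg\min_{\mathbf{p}\in\Delta^n}\tfrac14\sum_{s=1}^t\alpha_s\ell_s(\mathbf{p})+D_E(\mathbf{p},\tfrac{\mathbf{1}}{n})$ for $t=1,\dots,T$, $\overline{\mathbf{w}}_T=\frac{\sum_t\alpha_t\mathbf{w}_t}{\sum_t\alpha_t}$, with weighted regrets $R^{\mathbf{w}}=\sum_{t=1}^T\alpha_th_t(\mathbf{w}_t)-\min_{\mathbf{w}\in\mathbb{R}^d}\sum_{t=1}^T\alpha_th_t(\mathbf{w})$, $R^{\mathbf{p}}=\sum_{t=1}^T\alpha_t\ell_t(\mathbf{p}_t)-\min_{\mathbf{p}\in\Delta^n}\sum_{t=1}^T\alpha_t\ell_t(\mathbf{p})$. Then $R^{\mathbf{w}}\le2\sum_{t=1}^T\|\mathbf{p}_t-\mathbf{p}_{t-1}\|_1^2$, $R^{\mathbf{p}}\le4\log n-2\sum_{t=1}^T\|\mathbf{p}_t-\mathbf{p}_{t-1}\|_1^2$; there is a universal constant $C>0$ such that $\overline{\mathbf{w}}_T$ has non-negative margin ($\min_iy^{(i)}\mathbf{x}^{(i)\top}\overline{\mathbf{w}}_T\ge0$) whenever $T\ge C\sqrt{\log n}/\gamma$; and the normalized margin satisfies $\overline{\gamma}(\mathbf{v}_T)=\Omega\!\left(\gamma-\frac{8\log n}{\gamma T(T+1)}\right)$.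
   Context: $\Delta^n$ is the probability simplex; $\mathbf{1}$ the all-ones vector; $D_E(\mathbf{p},\mathbf{q})=\sum_ip_i\log(p_i/q_i)$. The normalized margin of $\mathbf{v}\ne\mathbf{0}$ is $\overline{\gamma}(\mathbf{v})=\frac{\min_{\mathbf{p}\in\Delta^n}\mathbf{p}^{\top}A\mathbf{v}}{\|\mathbf{v}\|_2}=\frac{\min_iy^{(i)}\mathbf{x}^{(i)\top}\mathbf{v}}{\|\mathbf{v}\|_2}$. *)

From HB Require Import structures.
From mathcomp Require Import all_boot all_order all_algebra.
From mathcomp Require Import all_classical all_reals all_analysis.
Set Implicit Arguments. Unset Strict Implicit. Unset Printing Implicit Defensive.
Import Order.TTheory GRing.Theory Num.Theory.
Local Open Scope ring_scope.
Local Open Scope classical_set_scope.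

Section Defs.
Variable R : realType.

Definition dotv (m : nat) (u v : 'rV[R]_m) : R := \sum_(k < m) u ord0 k * v ord0 k.
Definition norm2 (m : nat) (u : 'rV[R]_m) : R := Num.sqrt (dotv u u).
Definition norm1 (m : nat) (u : 'rV[R]_m) : R := \sum_(k < m) `|u ord0 k|.

Definition simplex (n : nat) : set 'rV[R]_n :=
  [set p | (forall i, 0 <= p ord0 i) /\ \sum_(i < n) p ord0 i = 1].
Arguments simplex : clear implicits.
Definition unif (n : nat) : 'rV[R]_n := const_mx (n%:R^-1).

(* relative entropy D_E(p,q) = sum_i p_i log(p_i/q_i), convention 0 log 0 = 0 *)
Definition KL (n : nat) (p q : 'rV[R]_n) : R :=
  \sum_(i < n) (if p ord0 i == 0 then 0 else p ord0 i * ln (p ord0 i / q ord0 i)).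

Definition data_matrix n d (x : 'I_n -> 'rV[R]_d) (y : 'I_n -> R) : 'M[R]_(n, d) :=
  \matrix_(i, k) (y i * x i ord0 k).

Definition minmargin n d (x : 'I_n -> 'rV[R]_d) (y : 'I_n -> R) (v : 'rV[R]_d) : R :=
  inf [set y i * dotv (x i) v | i in [set: 'I_n]].
Definition nmargin n d (x : 'I_n -> 'rV[R]_d) (y : 'I_n -> R) (v : 'rV[R]_d) : R :=
  minmargin x y v / norm2 v.

Definition data_ok n d (x : 'I_n -> 'rV[R]_d) (y : 'I_n -> R) (wstar : 'rV[R]_d)
    (gamma : R) : Prop :=
  [/\ (forall i, norm2 (x i) <= 1), (forall i, y i = 1 \/ y i = -1),
      norm2 wstar = 1, minmargin x y wstar = gamma & 0 < gamma].

(* g(w,p) = p^T A w - 1/2 ||w||^2 ;  A^T p is the row vector p *m A *)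
Definition gpay n d (A : 'M[R]_(n, d)) (w : 'rV[R]_d) (p : 'rV[R]_n) : R :=
  dotv (p *m A) w - 2^-1 * norm2 w ^+ 2.

(* weights alpha_t = t *)
Definition obj_w n d (A : 'M[R]_(n, d)) (p : nat -> 'rV[R]_n) (t : nat)
    (w : 'rV[R]_d) : R :=
  \sum_(1 <= j < t) j%:R * (- gpay A w (p j)) + t%:R * (- gpay A w (p t.-1)).

Definition obj_p n d (A : 'M[R]_(n, d)) (w : nat -> 'rV[R]_d) (t : nat)
    (p : 'rV[R]_n) : R :=
  4^-1 * (\sum_(1 <= s < t.+1) s%:R * gpay A (w s) p) + KL p (unif n).

Definition game_dynamics n d (A : 'M[R]_(n, d)) (T : nat)
    (w : nat -> 'rV[R]_d) (p : nat -> 'rV[R]_n) : Prop :=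
  p 0%N = unif n /\
  forall t, (1 <= t <= T)%N ->
    [/\ (forall w' : 'rV[R]_d, obj_w A p t (w t) <= obj_w A p t w'),
        simplex n (p t) &
        (forall p' : 'rV[R]_n, simplex n p' -> obj_p A w t (p t) <= obj_p A w t p')].

Definition wbar d (T : nat) (w : nat -> 'rV[R]_d) : 'rV[R]_d :=
  (\sum_(1 <= t < T.+1) (t%:R : R))^-1 *: \sum_(1 <= t < T.+1) t%:R *: w t.

Definition regret_w n d (A : 'M[R]_(n, d)) (T : nat)
    (w : nat -> 'rV[R]_d) (p : nat -> 'rV[R]_n) : R :=
  \sum_(1 <= t < T.+1) t%:R * (- gpay A (w t) (p t))
  - inf (range (fun w' : 'rV[R]_d => \sum_(1 <= t < T.+1) t%:R * (- gpay A w' (p t)))).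

Definition regret_p n d (A : 'M[R]_(n, d)) (T : nat)
    (w : nat -> 'rV[R]_d) (p : nat -> 'rV[R]_n) : R :=
  \sum_(1 <= t < T.+1) t%:R * gpay A (w t) (p t)
  - inf [set \sum_(1 <= t < T.+1) t%:R * gpay A (w t) p' | p' in simplex n].

Definition path_len n (T : nat) (p : nat -> 'rV[R]_n) : R :=
  \sum_(1 <= t < T.+1) norm1 (p t - p t.-1) ^+ 2.

Definition qexp n d (x : 'I_n -> 'rV[R]_d) (y : 'I_n -> R) (v : 'rV[R]_d) : 'rV[R]_n :=
  \row_i (expR (- y i * dotv v (x i)) / \sum_(j < n) expR (- y j * dotv v (x j))).

Definition accel_perceptron n d (x : 'I_n -> 'rV[R]_d) (y : 'I_n -> R) (T : nat)
    (v : nat -> 'rV[R]_d) (q : nat -> 'rV[R]_n) (g : nat -> 'rV[R]_d) : Prop :=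
  [/\ q 0%N = unif n, v 0%N = 0, g 0%N = 0 &
   forall t, (1 <= t <= T)%N ->
     [/\ v t = v t.-1 - (t%:R / (2 * t.+1%:R)) *: (g t.-1 - q t.-1 *m data_matrix x y),
         q t = qexp x y (v t) &
         g t = (t%:R / t.+1%:R) *: (g t.-1 - q t *m data_matrix x y)]].

End Defs.

From HB Require Import structures.
From mathcomp Require Import all_boot all_order all_algebra.
From mathcomp Require Import all_classical all_reals all_analysis.
From mathcomp Require Import ring lra.
Set Implicit Arguments. Unset Strict Implicit. Unset Printing Implicit Defensive.
Import Order.TTheory GRing.Theory Num.Theory.
Local Open Scope ring_scope.
Local Open Scope classical_set_scope.

(* The Accelerated Perceptron is a weighted game on [g(w, p) = p^T A w - |w|^2/2] in which
   the w-player plays optimistic follow-the-leader and the p-player plays entropic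
   follow-the-regularised-leader, whose minimiser is the softmax [q_t]. For quadratic
   losses the optimistic leader's regret is at most the variation
   [sum_t |A^T (p_t - p_(t-1))|^2 <= sum_t ||p_t - p_(t-1)||_1^2] (the rows of [A] have
   norm at most 1), while the 1/2-strong convexity of KL in the l1 norm (Pinsker) gives the
   p-player regret [4 ln n - 2 sum_t ||p_t - p_(t-1)||_1^2]. Adding the two, the weighted
   game value is bounded below by [gamma^2 / 2] (the w-player could play [gamma w*]) and
   above by the payoff of any pure strategy [i]; this gives
   [y_i x_i^T wbar_T >= gamma^2/2 + |wbar_T|^2/2 - 8 ln n / (T (T + 1))], and [v_T] is a
   positive multiple of [wbar_T] with [|wbar_T| >= gamma]. *)

Section Calculus.
Variable R : realType.

Lemma MVT_from1 (f df : R -> R) (x : R) :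
  (forall z : R, 0 < z -> is_derive z 1 f (df z)) -> 0 < x ->
  exists c, [/\ 0 < c, 0 < (c - 1) * (x - 1) \/ c = 1 & f x - f 1 = df c * (x - 1)].
Proof.
move=> fD x0.
have mvt (a b : R) : 0 < a -> a < b -> exists2 c, a < c < b & f b - f a = df c * (b - a).
  move=> a0 ab; have fDab (z : R) : z \in `]a, b[%R -> is_derive z 1 f (df z).
    by rewrite in_itv /= => /andP[az _]; apply: fD; lra.
  have fDer : {in `[a, b]%R, forall z, derivable f z 1}.
    move=> z; rewrite in_itv /= => /andP[az _].
    by have zD := fD z (lt_le_trans a0 az); exact: ex_derive.
  have [c] := MVT ab fDab (derivable_within_continuous fDer).
  by rewrite in_itv /=; exists c.
case: (ltrgtP x 1) => [x1|x1|->].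
- have [c /andP[xc c1] e] := mvt x 1 x0 x1.
  exists c; split; [lra | left; nra | lra].
- have [c /andP[c1 cx] e] := mvt 1 x ltr01 x1.
  exists c; split; [lra | left; nra | lra].
- by exists 1; split; [exact: ltr01 | right | rewrite !subrr mulr0].
Qed.

(* [entropy_bound (p/q) >= 0] is the termwise Pinsker bound [KL_term_lb]; it follows
   from [entropy_bound' = 4 entropy_bound_slope], both vanishing at [1] and
   [entropy_bound_slope' = ln x - 1 + 1/x >= 0]. *)
Definition entropy_bound_slope (x : R) : R := (x + 1) * ln x - 2 * (x - 1).

Definition entropy_bound (x : R) : R := 2 * x * (x + 2) * ln x - (x - 1) * (5 * x + 1).

Lemma entropy_bound_slope_derive (x : R) : 0 < x ->
  is_derive x 1 entropy_bound_slope (ln x + (x + 1) / x - 2).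
Proof.
move=> x0; have lnD := is_derive1_ln x0.
rewrite /entropy_bound_slope; apply: is_derive_eq; rewrite /GRing.scale /=.
by field; exact: lt0r_neq0.
Qed.

Lemma entropy_bound_derive (x : R) : 0 < x ->
  is_derive x 1 entropy_bound (4 * entropy_bound_slope x).
Proof.
move=> x0; have lnD := is_derive1_ln x0.
rewrite /entropy_bound /entropy_bound_slope; apply: is_derive_eq; rewrite /GRing.scale /=.
by field; exact: lt0r_neq0.
Qed.

Lemma entropy_bound_slope_sign (x : R) : 0 < x -> 0 <= (x - 1) * entropy_bound_slope x.
Proof.
move=> x0; have [c [c0 _ e]] := MVT_from1 entropy_bound_slope_derive x0.
have slope_ge0 : 0 <= ln c + (c + 1) / c - 2.
  have c1 : -1 < c^-1 - 1 by rewrite -invr_gt0 in c0; lra.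
  have := le_ln1Dx c1; rewrite addrC subrK lnV ?posrE // mulrDl divff ?gt_eqF //.
  lra.
have -> : entropy_bound_slope x = (ln c + (c + 1) / c - 2) * (x - 1).
  by rewrite -e /entropy_bound_slope ln1; ring.
by rewrite mulrC -mulrA -expr2 mulr_ge0 // sqr_ge0.
Qed.

Lemma entropy_bound_ge0 (x : R) : 0 < x -> 0 <= entropy_bound x.
Proof.
move=> x0; have [c [c0 c_side e]] := MVT_from1 entropy_bound_derive x0.
have G1 : entropy_bound 1 = 0 by rewrite /entropy_bound ln1; ring.
rewrite G1 subr0 in e; rewrite e -mulrA mulr_ge0 //.
case: c_side => [cx|->]; last by rewrite /entropy_bound_slope ln1 !(subrr, mulr0, mul0r).
have sq : 0 <= (c - 1) ^+ 2 * (entropy_bound_slope c * (x - 1)).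
  rewrite (_ : _ * _ = ((c - 1) * entropy_bound_slope c) * ((c - 1) * (x - 1))); last by ring.
  by rewrite mulr_ge0 // ?entropy_bound_slope_sign // ltW.
rewrite -(pmulr_rge0 _ (_ : 0 < (c - 1) ^+ 2)) //.
by rewrite exprn_even_gt0 //=; apply: contraTneq cx => ->; rewrite mul0r ltxx.
Qed.

Lemma KL_term_lb (p q : R) : 0 <= p -> 0 < q ->
  3 * (p - q) ^+ 2 / (2 * (p + 2 * q)) <= (if p == 0 then 0 else p * ln (p / q)) - p + q.
Proof.
move=> p0 q0; case: eqP => [->|/eqP pn0].
  rewrite (_ : 3 * _ / _ = 3 / 4 * q); first lra.
  by field; exact: lt0r_neq0.
have {p0 pn0}p0 : 0 < p by rewrite lt_neqAle eq_sym pn0.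
have := entropy_bound_ge0 (divr_gt0 p0 q0); rewrite /entropy_bound.
set L := ln (p / q) => hG.
have scaled : q ^+ 2 * (2 * (p / q) * (p / q + 2) * L - (p / q - 1) * (5 * (p / q) + 1))
   = 2 * p * (p + 2 * q) * L - (p - q) * (5 * p + q).
  by field; exact: lt0r_neq0.
have hG' : 0 <= 2 * p * (p + 2 * q) * L - (p - q) * (5 * p + q).
  by rewrite -scaled mulr_ge0 // sqr_ge0.
rewrite ler_pdivrMr; last lra.
have -> : (p * L - p + q) * (2 * (p + 2 * q)) =
  (2 * p * (p + 2 * q) * L - (p - q) * (5 * p + q)) + 3 * (p - q) ^+ 2 by ring.
by rewrite lerDr.
Qed.

End Calculus.

Section InnerProduct.
Variables (R : realType) (m : nat).
Implicit Types u v w : 'rV[R]_m.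

Lemma dotvC u v : dotv u v = dotv v u.
Proof. by apply: eq_bigr => k _; rewrite mulrC. Qed.

Lemma dotvDl u v w : dotv (u + v) w = dotv u w + dotv v w.
Proof. by rewrite /dotv -big_split; apply: eq_bigr => k _; rewrite mxE mulrDl. Qed.

Lemma dotvZl a u w : dotv (a *: u) w = a * dotv u w.
Proof. by rewrite /dotv mulr_sumr; apply: eq_bigr => k _; rewrite mxE mulrA. Qed.

Lemma dotvNl u w : dotv (- u) w = - dotv u w.
Proof. by rewrite -scaleN1r dotvZl mulN1r. Qed.

Lemma dotvBl u v w : dotv (u - v) w = dotv u w - dotv v w.
Proof. by rewrite dotvDl dotvNl. Qed.

Lemma dotv0l w : dotv 0 w = 0.
Proof. by rewrite -(scale0r 0) dotvZl mul0r. Qed.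

Lemma dotvDr u v w : dotv w (u + v) = dotv w u + dotv w v.
Proof. by rewrite dotvC dotvDl !(dotvC w). Qed.

Lemma dotvZr a u w : dotv w (a *: u) = a * dotv w u.
Proof. by rewrite dotvC dotvZl dotvC. Qed.

Lemma dotvBr u v w : dotv w (u - v) = dotv w u - dotv w v.
Proof. by rewrite dotvC dotvBl !(dotvC w). Qed.

Lemma dotv_suml (I : Type) (r : seq I) (P : pred I) (F : I -> 'rV[R]_m) w :
  dotv (\sum_(i <- r | P i) F i) w = \sum_(i <- r | P i) dotv (F i) w.
Proof. by elim/big_rec2: _ => [|i _ s _ <-]; rewrite ?dotv0l ?dotvDl. Qed.

Lemma dotv_sumr (I : Type) (r : seq I) (P : pred I) (F : I -> 'rV[R]_m) w :
  dotv w (\sum_(i <- r | P i) F i) = \sum_(i <- r | P i) dotv w (F i).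
Proof. by rewrite dotvC dotv_suml; apply: eq_bigr => i _; rewrite dotvC. Qed.

Lemma dotv_ge0 u : 0 <= dotv u u.
Proof. by apply: sumr_ge0 => k _; rewrite -expr2 sqr_ge0. Qed.

Lemma dotv_eq0 u : (dotv u u == 0) = (u == 0).
Proof.
apply/idP/eqP => [|->]; last by rewrite dotv0l.
rewrite psumr_eq0 => [/allP u0|k _]; last by rewrite -expr2 sqr_ge0.
apply/rowP => k; rewrite mxE; apply/eqP.
by have := u0 k (mem_index_enum _); rewrite /= -expr2 sqrf_eq0.
Qed.

Lemma norm2_ge0 u : 0 <= norm2 u.
Proof. exact: sqrtr_ge0. Qed.

Lemma norm2_sqr u : norm2 u ^+ 2 = dotv u u.
Proof. by rewrite /norm2 sqr_sqrtr // dotv_ge0. Qed.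

Lemma norm2Z a u : 0 <= a -> norm2 (a *: u) = a * norm2 u.
Proof.
move=> a0; rewrite /norm2 dotvZl dotvZr mulrA sqrtrM ?mulr_ge0 //.
by rewrite -expr2 sqrtr_sqr ger0_norm.
Qed.

Lemma mulr2_dotv_le u v : 2 * dotv u v <= dotv u u + dotv v v.
Proof. by have := dotv_ge0 (u - v); rewrite !dotvBl !dotvBr (dotvC v u); lra. Qed.

(* Expand [0 <= |(u.u) v - (u.v) u|^2 = (u.u) ((u.u)(v.v) - (u.v)^2)]. *)
Lemma dotv_CauchySchwarz u v : dotv u v ^+ 2 <= dotv u u * dotv v v.
Proof.
have [/eqP u0|u0] := eqVneq (dotv u u) 0.
  by move: (u0); rewrite dotv_eq0 => /eqP ->; rewrite !dotv0l expr0n mul0r.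
have uu_gt0 : 0 < dotv u u by rewrite lt_neqAle eq_sym u0 dotv_ge0.
have := dotv_ge0 (dotv u u *: v - dotv u v *: u).
rewrite !(dotvBl, dotvBr, dotvZl, dotvZr) (dotvC v u) => h.
rewrite -subr_ge0 -(pmulr_rge0 _ uu_gt0); lra.
Qed.

Lemma dotv_le_norm2 u v : norm2 u = 1 -> dotv u v <= norm2 v.
Proof.
move=> u1; rewrite -(ger0_norm (norm2_ge0 v)); apply: le_trans (ler_norm _) _.
rewrite -ler_sqr ?nnegrE // !real_normK ?num_real // norm2_sqr.
by rewrite -[dotv v v]mul1r -(expr1n _ 2) -u1 norm2_sqr dotv_CauchySchwarz.
Qed.

End InnerProduct.

Section Entropy.
Variables (R : realType) (n : nat).
Implicit Types (p q : 'rV[R]_n) (a : 'rV[R]_n).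

Lemma norm1N p : norm1 (- p) = norm1 p.
Proof. by apply: eq_bigr => i _; rewrite mxE normrN. Qed.

Lemma norm1_eq0 p : norm1 p = 0 -> p = 0.
Proof.
move=> /eqP; rewrite psumr_eq0 => [/allP p0|k _]; last exact: normr_ge0.
apply/rowP => k; rewrite mxE; apply/eqP.
by have := p0 k (mem_index_enum _); rewrite /= normr_eq0.
Qed.

Lemma sum_abs_sqr_le (e w : 'I_n -> R) : (forall i, 0 < w i) ->
  (\sum_i `|e i|) ^+ 2 <= (\sum_i e i ^+ 2 / w i) * \sum_i w i.
Proof.
move=> w_gt0.
pose u : 'rV[R]_n := \row_i (`|e i| / Num.sqrt (w i)).
pose v : 'rV[R]_n := \row_i Num.sqrt (w i).
have sqrt_w i : Num.sqrt (w i) != 0 by rewrite sqrtr_eq0 -ltNge.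
have -> : \sum_i `|e i| = dotv u v.
  by apply: eq_bigr => i _; rewrite !mxE divfK.
have -> : \sum_i e i ^+ 2 / w i = dotv u u.
  apply: eq_bigr => i _; rewrite !mxE -expr2 expr_div_n real_normK ?num_real //.
  by rewrite sqr_sqrtr // ltW.
have -> : \sum_i w i = dotv v v.
  by apply: eq_bigr => i _; rewrite !mxE -expr2 sqr_sqrtr // ltW.
exact: dotv_CauchySchwarz.
Qed.

Lemma simplex_le1 p i : simplex p -> p ord0 i <= 1.
Proof.
move=> [p0 p1]; rewrite -p1 (bigD1 i) //= lerDl.
by apply: sumr_ge0 => j _; exact: p0.
Qed.

(* Each KL term dominates [3/2 (p_i - q_i)^2 / (p_i + 2 q_i)]; the weights [p_i + 2 q_i]
   sum to 3, so Cauchy-Schwarz turns these into [||p - q||_1^2 / 2]. *)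
Lemma Pinsker p q : simplex p -> simplex q -> (forall i, 0 < q ord0 i) ->
  norm1 (p - q) ^+ 2 / 2 <= KL p q.
Proof.
move=> [p0 p1] [q0 q1] q_gt0.
have w_gt0 i : 0 < p ord0 i + 2 * q ord0 i by have := p0 i; have := q_gt0 i; lra.
have := sum_abs_sqr_le (fun i => p ord0 i - q ord0 i) w_gt0.
rewrite big_split /= -mulr_sumr p1 q1.
have -> : norm1 (p - q) = \sum_i `|p ord0 i - q ord0 i| by apply: eq_bigr => i _; rewrite !mxE.
have termwise : \sum_i 3 * (p ord0 i - q ord0 i) ^+ 2 / (2 * (p ord0 i + 2 * q ord0 i))
    <= KL p q.
  have -> : KL p q = \sum_i ((if p ord0 i == 0 then 0 else p ord0 i * ln (p ord0 i / q ord0 i))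
                               - p ord0 i + q ord0 i).
    by rewrite !big_split /= sumrN p1 q1 addrNK.
  by apply: ler_sum => i _; exact: KL_term_lb.
have factor : \sum_i 3 * (p ord0 i - q ord0 i) ^+ 2 / (2 * (p ord0 i + 2 * q ord0 i))
    = 3 / 2 * \sum_i (p ord0 i - q ord0 i) ^+ 2 / (p ord0 i + 2 * q ord0 i).
  by rewrite mulr_sumr; apply: eq_bigr => i _; field; rewrite gt_eqF.
rewrite factor in termwise.
lra.
Qed.

Lemma unif_gt0 i : 0 < unif R n ord0 i.
Proof. by rewrite mxE invr_gt0 ltr0n; case: n i => [[]|]. Qed.

Lemma unif_simplex : (0 < n)%N -> simplex (unif R n).
Proof.
move=> n0; split=> [i|]; first exact/ltW/unif_gt0.
under eq_bigr do rewrite mxE.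
by rewrite sumr_const card_ord -[_ *+ n]mulr_natr mulVf // pnatr_eq0 -lt0n.
Qed.

Lemma KL_ge0 p q : simplex p -> simplex q -> (forall i, 0 < q ord0 i) -> 0 <= KL p q.
Proof. by move=> sp sq q_gt0; apply: le_trans (Pinsker sp sq q_gt0); rewrite divr_ge0 ?sqr_ge0. Qed.

Lemma KL_id p : KL p p = 0.
Proof. by rewrite /KL big1 // => i _; case: eqP => // /eqP p0; rewrite divff // ln1 mulr0. Qed.

Lemma KL_unif_le_ln p : (0 < n)%N -> simplex p -> KL p (unif R n) <= ln n%:R.
Proof.
move=> n0 sp; have [p0 p1] := sp.
apply: (@le_trans _ _ (\sum_i p ord0 i * ln n%:R)); last by rewrite -mulr_suml p1 mul1r.
apply: ler_sum => i _; case: eqP => [->|/eqP pi0]; first by rewrite mul0r.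
have pi_gt0 : 0 < p ord0 i by rewrite lt_neqAle eq_sym pi0 p0.
rewrite mxE invrK lnM ?posrE ?ltr0n // mulrDr gerDr.
by apply: mulr_ge0_le0; [exact: ltW | exact/ln_le0/simplex_le1].
Qed.

Definition softmax a : 'rV[R]_n := \row_i (expR (- a ord0 i) / \sum_j expR (- a ord0 j)).

Lemma partition_gt0 a : (0 < n)%N -> 0 < \sum_j expR (- a ord0 j).
Proof.
case: n a => // k a _; rewrite (bigD1 ord0) //= ltr_pwDl ?expR_gt0 //.
by apply: sumr_ge0 => j _; exact/ltW/expR_gt0.
Qed.

Lemma softmax_gt0 a i : 0 < softmax a ord0 i.
Proof. by rewrite mxE divr_gt0 ?expR_gt0 ?partition_gt0 //; case: n a i => [|k] a []. Qed.

Lemma softmax_simplex a : (0 < n)%N -> simplex (softmax a).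
Proof.
move=> n0; split=> [i|]; first exact/ltW/softmax_gt0.
under eq_bigr do rewrite mxE.
by rewrite -mulr_suml divff // gt_eqF // partition_gt0.
Qed.

Lemma KL_softmax a p : (0 < n)%N -> simplex p ->
  KL p (softmax a) = KL p (unif R n) + dotv p a + (ln (\sum_j expR (- a ord0 j)) - ln n%:R).
Proof.
move=> n0 [p0 p1]; have Z_gt0 := partition_gt0 a n0.
have -> : ln (\sum_j expR (- a ord0 j)) - ln n%:R
    = \sum_i p ord0 i * (ln (\sum_j expR (- a ord0 j)) - ln n%:R).
  by rewrite -mulr_suml p1 mul1r.
rewrite /KL /dotv -!big_split /=.
apply: eq_bigr => i _; case: eqP => [->|/eqP pi0]; first by rewrite !mul0r !addr0.
have pi_gt0 : 0 < p ord0 i by rewrite lt_neqAle eq_sym pi0 p0.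
have lnK : ln (expR (- a ord0 i)) = - a ord0 i :> R by exact: expRK.
rewrite !mxE !ln_div ?posrE ?expR_gt0 ?divr_gt0 ?invr_gt0 ?ltr0n //; last exact: expR_gt0.
by rewrite lnK lnV ?posrE ?ltr0n //; ring.
Qed.

Section EntropicObjective.
Variables (Phi : 'rV[R]_n -> R) (a : 'rV[R]_n) (k : R).
Hypotheses (n_gt0 : (0 < n)%N)
  (PhiE : forall p, simplex p -> Phi p = dotv p a + k + KL p (unif R n)).

Lemma entropic_objectiveE p : simplex p -> Phi p = Phi (softmax a) + KL p (softmax a).
Proof.
move=> sp; have ss := softmax_simplex a n_gt0.
have := KL_softmax a n_gt0 ss; rewrite KL_id => Z.
by rewrite !PhiE // !KL_softmax //; lra.
Qed.

Lemma softmax_minimizes p : simplex p -> Phi (softmax a) <= Phi p.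
Proof.
move=> sp; rewrite (entropic_objectiveE sp) lerDl.
exact: KL_ge0 sp (softmax_simplex a n_gt0) (softmax_gt0 a).
Qed.

(* Pinsker forces the minimiser to be the softmax, above which [Phi] grows by a KL
   divergence, hence by half a squared l1-distance. *)
Lemma entropic_min_strong pt : simplex pt -> (forall p, simplex p -> Phi pt <= Phi p) ->
  forall p, simplex p -> Phi pt + norm1 (p - pt) ^+ 2 / 2 <= Phi p.
Proof.
move=> spt pt_min p sp; have ss := softmax_simplex a n_gt0.
suff pt_softmax : pt = softmax a.
  by rewrite (entropic_objectiveE sp) pt_softmax lerD2l; exact: Pinsker sp ss (softmax_gt0 a).
have := pt_min _ ss; rewrite (entropic_objectiveE spt) gerDl => KL_le0.
have l1_le0 : norm1 (pt - softmax a) ^+ 2 <= 0.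
  by have := Pinsker spt ss (softmax_gt0 a); lra.
have : norm1 (pt - softmax a) = 0 by apply/eqP; rewrite -sqrf_eq0 eq_le l1_le0 sqr_ge0.
by move/norm1_eq0/eqP; rewrite subr_eq0 => /eqP.
Qed.

End EntropicObjective.
End Entropy.

Section Triangular.
Variable R : realType.

Definition triangular (k : nat) : R := k%:R * k.+1%:R / 2.

Lemma triangular0 : triangular 0 = 0.
Proof. by rewrite /triangular !mul0r. Qed.

Lemma triangularS k : triangular k.+1 = triangular k + k.+1%:R.
Proof. by rewrite /triangular -addn1 !natrD; field. Qed.

Lemma triangular_gt0 k : (0 < k)%N -> 0 < triangular k.
Proof. by move=> k0; rewrite /triangular divr_gt0 // mulr_gt0 ?ltr0n. Qed.

Lemma triangular_ge0 k : 0 <= triangular k.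
Proof. by case: k => [|k]; [rewrite triangular0 | exact/ltW/triangular_gt0]. Qed.

Lemma sum_natr_triangular k : \sum_(1 <= j < k.+1) (j%:R : R) = triangular k.
Proof.
elim: k => [|k IH]; first by rewrite big_geq // triangular0.
by rewrite big_nat_recr //= IH triangularS.
Qed.

End Triangular.

Section Quadratic.
Variables (R : realType) (d : nat).
Implicit Types (a b c u w M : 'rV[R]_d) (s t : R).

Lemma sum_quad_loss (I : Type) (r : seq I) (P : pred I) (C : I -> R) (F : I -> 'rV[R]_d) w :
  \sum_(i <- r | P i) C i * (- (dotv (F i) w - 2^-1 * dotv w w))
  = 2^-1 * (\sum_(i <- r | P i) C i) * dotv w w - dotv (\sum_(i <- r | P i) C i *: F i) w.
Proof.
rewrite dotv_suml -mulrA mulr_suml mulr_sumr -sumrB.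
by apply: eq_bigr => i _; rewrite dotvZl; ring.
Qed.

Lemma quadratic_complete_square s M w : 0 < s ->
  2^-1 * s * dotv w w - dotv M w
  = 2^-1 * s * dotv (w - s^-1 *: M) (w - s^-1 *: M) - dotv M M / (2 * s).
Proof.
move=> s0; rewrite !(dotvBl, dotvBr, dotvZl, dotvZr) (dotvC w M).
by field; exact: lt0r_neq0.
Qed.

Lemma quadratic_lb s M w : 0 < s -> - (dotv M M / (2 * s)) <= 2^-1 * s * dotv w w - dotv M w.
Proof.
move=> s0; rewrite quadratic_complete_square // addrC lerDl.
by rewrite !mulr_ge0 ?dotv_ge0 ?invr_ge0 ?ltW.
Qed.

Lemma quadratic_min s M w : 0 < s ->
  2^-1 * s * dotv (s^-1 *: M) (s^-1 *: M) - dotv M (s^-1 *: M) <= 2^-1 * s * dotv w w - dotv M w.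
Proof.
move=> s0; rewrite [X in X <= _]quadratic_complete_square // subrr dotv0l mulr0 add0r.
exact: quadratic_lb.
Qed.

Lemma quadratic_argmin s M w : 0 < s ->
  (forall w', 2^-1 * s * dotv w w - dotv M w <= 2^-1 * s * dotv w' w' - dotv M w') ->
  w = s^-1 *: M.
Proof.
move=> s0 /(_ (s^-1 *: M)); rewrite !quadratic_complete_square // subrr dotv0l mulr0.
rewrite lerD2r pmulr_rle0 ?mulr_gt0 ?invr_gt0 // => le0.
by apply/eqP; rewrite -subr_eq0 -dotv_eq0 eq_le le0 dotv_ge0.
Qed.

(* One step of optimistic follow-the-leader on quadratic losses: [w] is the leader
   computed with the hint [b] in place of the new loss [c], and [-|a|^2/(2s)] is the
   minimal past loss. The inequality is an identity up to the dropped term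
   [s/2 |w - a/s|^2]; when [s = 0] there is no past. *)
Lemma optimistic_step a b c s t w : 0 <= s -> 0 < t -> (s = 0 -> a = 0) ->
  w = (s + t)^-1 *: (a + t *: b) ->
  t * (- (dotv c w - 2^-1 * dotv w w)) + dotv (a + t *: c) (a + t *: c) / (2 * (s + t))
    - dotv a a / (2 * s)
  <= t ^+ 2 / (2 * (s + t)) * dotv (b - c) (b - c).
Proof.
move=> s0 t0 a0 ->; have st0 : s + t != 0 by rewrite gt_eqF //; lra.
have [s_eq0|s_neq0] := eqVneq s 0.
  rewrite s_eq0 a0 // !add0r !(dotv0l, dotvBl, dotvBr, dotvZl, dotvZr) (dotvC c b).
  rewrite mulr0 invr0 mulr0 subr0 le_eqVlt; apply/orP; left; apply/eqP.
  by field; exact: lt0r_neq0.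
set l := (s + t)^-1 *: _.
rewrite -subr_ge0 (_ : _ - _ = s / 2 * dotv (l - s^-1 *: a) (l - s^-1 *: a)).
  by rewrite mulr_ge0 ?dotv_ge0 // divr_ge0.
rewrite /l !(dotvBl, dotvBr, dotvDl, dotvDr, dotvZl, dotvZr) (dotvC b a) (dotvC c a) (dotvC c b).
by field; rewrite s_neq0 st0.
Qed.

End Quadratic.

Section Matrices.
Variables (R : realType) (n d : nat).

Lemma dotv_mulmx (M : 'M[R]_(n, d)) (p : 'rV[R]_n) (w : 'rV[R]_d) :
  dotv (p *m M) w = dotv p (w *m M^T).
Proof.
rewrite /dotv; under eq_bigr do rewrite mxE mulr_suml.
rewrite exchange_big /=; apply: eq_bigr => i _.
by rewrite mxE mulr_sumr; apply: eq_bigr => k _; rewrite mxE; ring.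
Qed.

Lemma mulmx_rowE (M : 'M[R]_(n, d)) (e : 'rV[R]_n) : e *m M = \sum_i e ord0 i *: row i M.
Proof. by apply/rowP => k; rewrite mxE summxE; apply: eq_bigr => i _; rewrite !mxE. Qed.

Lemma dotv_mulmx_le_norm1 (M : 'M[R]_(n, d)) (e : 'rV[R]_n) :
  (forall i, norm2 (row i M) <= 1) -> dotv (e *m M) (e *m M) <= norm1 e ^+ 2.
Proof.
move=> M_rows; rewrite mulmx_rowE dotv_suml /norm1 expr2 mulr_suml.
apply: ler_sum => i _; rewrite dotv_sumr mulr_sumr.
apply: ler_sum => j _; rewrite dotvZl dotvZr mulrA.
apply: le_trans (ler_norm _) _; rewrite !normrM ler_piMr ?mulr_ge0 //.
rewrite -ler_sqr ?nnegrE // expr1n real_normK ?num_real //.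
apply: le_trans (dotv_CauchySchwarz _ _) _.
by rewrite -!norm2_sqr mulr_ile1 ?exprn_ge0 ?norm2_ge0 ?exprn_ile1 ?norm2_ge0.
Qed.

Lemma gpayE (M : 'M[R]_(n, d)) w p : gpay M w p = dotv (p *m M) w - 2^-1 * dotv w w.
Proof. by rewrite /gpay norm2_sqr. Qed.

End Matrices.

Section WeightedSums.
Variables (R : realType) (d : nat).
Implicit Types u : nat -> 'rV[R]_d.

Definition wsum u (k : nat) : 'rV[R]_d := \sum_(1 <= j < k.+1) j%:R *: u j.

Definition optimistic_leader u (t : nat) : 'rV[R]_d :=
  (triangular R t)^-1 *: (wsum u t.-1 + t%:R *: u t.-1).

Lemma wsum0 u : wsum u 0 = 0.
Proof. by rewrite /wsum big_geq. Qed.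

Lemma wsumS u k : wsum u k.+1 = wsum u k + k.+1%:R *: u k.+1.
Proof. by rewrite /wsum big_nat_recr. Qed.

Lemma wbarE T u : wbar T u = (triangular R T)^-1 *: wsum u T.
Proof. by rewrite /wbar sum_natr_triangular. Qed.

End WeightedSums.

Section GameDynamics.
Variables (R : realType) (n d : nat) (A : 'M[R]_(n, d)) (T : nat).
Variables (w : nat -> 'rV[R]_d) (p : nat -> 'rV[R]_n).
Hypotheses (n_gt0 : (0 < n)%N) (dyn : game_dynamics A T w p).

Local Notation u := (fun j => p j *m A).

Lemma dynamics_simplex j : (j <= T)%N -> simplex (p j).
Proof.
case: j => [_|j jT]; first by case: dyn => -> _; exact: unif_simplex.
by case: dyn => _ /(_ j.+1); rewrite jT => /(_ isT) [].
Qed.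

Lemma obj_wE t w' : obj_w A p t.+1 w' =
  2^-1 * triangular R t.+1 * dotv w' w' - dotv (wsum u t + t.+1%:R *: u t) w'.
Proof.
rewrite /obj_w /=; under eq_bigr do rewrite gpayE.
by rewrite sum_quad_loss sum_natr_triangular gpayE triangularS dotvDl dotvZl; ring.
Qed.

Lemma dynamics_leader t : (0 < t <= T)%N -> w t = optimistic_leader u t.
Proof.
case: t => // t /andP[_ tT]; case: dyn => _ /(_ t.+1); rewrite tT => /(_ isT) [w_min _ _].
by apply: quadratic_argmin; [exact: triangular_gt0 | move=> w'; rewrite -!obj_wE].
Qed.

Definition leader_value k := dotv (wsum u k) (wsum u k) / (2 * triangular R k).

Lemma leader_loss_step k : (k < T)%N ->
  k.+1%:R * (- gpay A (w k.+1) (p k.+1)) + leader_value k.+1 - leader_value k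
  <= dotv (u k - u k.+1) (u k - u k.+1).
Proof.
move=> kT; rewrite dynamics_leader ?ltn0Sn // gpayE /leader_value wsumS triangularS.
apply: le_trans (optimistic_step (b := p k *m A) _ _ _ _ _) _.
- exact: triangular_ge0.
- by rewrite ltr0n.
- case: k {kT} => [_|k]; first exact: wsum0.
  by move/eqP; rewrite gt_eqF // triangular_gt0.
- by rewrite /optimistic_leader triangularS.
rewrite ler_piMl ?dotv_ge0 // -triangularS /triangular ler_pdivrMr; last first.
  by rewrite !mulr_gt0 ?ltr0n.
by rewrite mul1r expr2 mulrA mulrAC divff // mul1r -!natrM ler_nat leq_mul2l ltnW.
Qed.

Lemma leader_loss_sum_le k : (k <= T)%N ->
  \sum_(1 <= t < k.+1) t%:R * (- gpay A (w t) (p t)) + leader_value k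
  <= \sum_(1 <= t < k.+1) dotv (u t.-1 - u t) (u t.-1 - u t).
Proof.
elim: k => [_|k IH kT]; first by rewrite !big_geq // /leader_value wsum0 dotv0l mul0r addr0.
rewrite !(big_nat_recr k.+1 1) //=.
by have := IH (ltnW kT); have := leader_loss_step kT; lra.
Qed.

Lemma cumulative_loss_wE w' : \sum_(1 <= t < T.+1) t%:R * (- gpay A w' (p t))
  = 2^-1 * triangular R T * dotv w' w' - dotv (wsum u T) w'.
Proof. by under eq_bigr do rewrite gpayE; rewrite sum_quad_loss sum_natr_triangular. Qed.

Lemma cumulative_loss_w_lb w' : (0 < T)%N ->
  - leader_value T <= \sum_(1 <= t < T.+1) t%:R * (- gpay A w' (p t)).
Proof. by move=> T0; rewrite cumulative_loss_wE; apply: quadratic_lb; exact: triangular_gt0. Qed.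

Lemma regret_w_le_variation : (0 < T)%N ->
  regret_w A T w p <= \sum_(1 <= t < T.+1) dotv (u t.-1 - u t) (u t.-1 - u t).
Proof.
move=> T0; have inf_lb : - leader_value T <= inf (range (fun w' : 'rV[R]_d =>
    \sum_(1 <= t < T.+1) t%:R * (- gpay A w' (p t)))).
  apply: lb_le_inf; first by eexists; exists 0.
  by move=> _ [w' _ <-]; exact: cumulative_loss_w_lb.
by rewrite /regret_w; have := leader_loss_sum_le (leqnn T); lra.
Qed.

Lemma regret_w_le_path_len : (0 < T)%N -> (forall i, norm2 (row i A) <= 1) ->
  regret_w A T w p <= path_len T p.
Proof.
move=> T0 A_rows; apply: le_trans (regret_w_le_variation T0) _.
apply: ler_sum => t _; rewrite -mulmxBl -opprB.
by rewrite -(norm1N (p t - p t.-1)) dotv_mulmx_le_norm1.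
Qed.

End GameDynamics.

Lemma path_len_ge0 (R : realType) n T (p : nat -> 'rV[R]_n) : 0 <= path_len T p.
Proof. by apply: sumr_ge0 => t _; exact: sqr_ge0. Qed.

Section EntropicPlayer.
Variables (R : realType) (n d : nat) (A : 'M[R]_(n, d)) (T : nat).
Variables (w : nat -> 'rV[R]_d) (p : nat -> 'rV[R]_n).
Hypotheses (n_gt0 : (0 < n)%N) (dyn : game_dynamics A T w p).

Lemma obj_pE k q : obj_p A w k q =
  dotv q (4^-1 *: \sum_(1 <= s < k.+1) s%:R *: (w s *m A^T))
  - 4^-1 * \sum_(1 <= s < k.+1) s%:R * (2^-1 * dotv (w s) (w s)) + KL q (unif R n).
Proof.
rewrite /obj_p dotvZr dotv_sumr -mulrBr; congr (_ * _ + _).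
rewrite -sumrB; apply: eq_bigr => s _.
by rewrite gpayE dotv_mulmx dotvZr; ring.
Qed.

Lemma obj_pS k q : obj_p A w k.+1 q = obj_p A w k q + 4^-1 * (k.+1%:R * gpay A (w k.+1) q).
Proof. by rewrite /obj_p (big_nat_recr k.+1 1) //= mulrDr; ring. Qed.

Lemma obj_p_strong_min k : (k <= T)%N -> forall q, simplex q ->
  obj_p A w k (p k) + norm1 (q - p k) ^+ 2 / 2 <= obj_p A w k q.
Proof.
move=> kT; apply: (entropic_min_strong n_gt0 (fun q _ => obj_pE k q)).
  exact: (dynamics_simplex n_gt0 dyn kT).
case: k kT => [_|k kT] q sq; last first.
  by case: dyn => _ /(_ k.+1); rewrite kT => /(_ isT) [_ _ /(_ q sq)].
have obj_p0 q' : obj_p A w 0 q' = KL q' (unif R n) by rewrite /obj_p big_geq // mulr0 add0r.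
case: dyn => -> _; rewrite !obj_p0 KL_id.
by apply: KL_ge0 => //; [exact: unif_simplex | exact: unif_gt0].
Qed.

Lemma ftrl_loss_sum_le k : (k <= T)%N ->
  4^-1 * \sum_(1 <= s < k.+1) s%:R * gpay A (w s) (p s)
  + 2^-1 * \sum_(1 <= s < k.+1) norm1 (p s - p s.-1) ^+ 2 <= obj_p A w k (p k).
Proof.
elim: k => [_|k IH kT].
  by rewrite !big_geq // /obj_p big_geq //; case: dyn => -> _; rewrite KL_id; lra.
rewrite !(big_nat_recr k.+1 1) //= obj_pS.
have := IH (ltnW kT); have := obj_p_strong_min (ltnW kT) (dynamics_simplex n_gt0 dyn kT); lra.
Qed.

Lemma cumulative_loss_p_lb q : simplex q ->
  \sum_(1 <= t < T.+1) t%:R * gpay A (w t) (p t) + 2 * path_len T p - 4 * ln n%:R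
  <= \sum_(1 <= t < T.+1) t%:R * gpay A (w t) q.
Proof.
move=> sq; have := ftrl_loss_sum_le (leqnn T); have := obj_p_strong_min (leqnn T) sq.
have := KL_unif_le_ln n_gt0 sq; have := sqr_ge0 (norm1 (q - p T)).
by rewrite /obj_p /path_len; lra.
Qed.

Lemma regret_p_le : regret_p A T w p <= 4 * ln n%:R - 2 * path_len T p.
Proof.
have : \sum_(1 <= t < T.+1) t%:R * gpay A (w t) (p t) + 2 * path_len T p - 4 * ln n%:R
    <= inf [set \sum_(1 <= t < T.+1) t%:R * gpay A (w t) p' | p' in @simplex R n].
  apply: lb_le_inf; first by eexists; exists (unif R n) => //; exact: unif_simplex.
  by move=> _ [q sq <-]; exact: cumulative_loss_p_lb.
by rewrite /regret_p; lra.
Qed.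

End EntropicPlayer.

Lemma minmargin_le (R : realType) n d (x : 'I_n -> 'rV[R]_d) (y : 'I_n -> R) v i :
  minmargin x y v <= y i * dotv (x i) v.
Proof.
apply: ge_inf; last by exists i.
exists (- \sum_j `|y j * dotv (x j) v|) => _ [j _ <-].
rewrite lerNl; apply: le_trans (ler_norm _) _.
by rewrite normrN (bigD1 j) //= lerDl sumr_ge0 // => k _; exact: normr_ge0.
Qed.

Section Data.
Variables (R : realType) (n d : nat) (x : 'I_n -> 'rV[R]_d) (y : 'I_n -> R).
Variables (wstar : 'rV[R]_d) (gamma : R).
Hypothesis data : data_ok x y wstar gamma.

Local Notation A := (data_matrix x y).

Lemma data_matrix_row i : row i A = y i *: x i.
Proof. by apply/rowP => k; rewrite !mxE. Qed.

Lemma data_matrix_row_norm i : norm2 (row i A) <= 1.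
Proof.
have [x_le1 y_pm1 _ _ _] := data.
rewrite data_matrix_row /norm2 dotvZl dotvZr mulrA -expr2.
have -> : y i ^+ 2 = 1 by case: (y_pm1 i) => ->; rewrite ?sqrrN expr1n.
by rewrite mul1r; exact: x_le1.
Qed.

Lemma dotv_data_matrix q v : dotv (q *m A) v = \sum_i q ord0 i * (y i * dotv (x i) v).
Proof.
rewrite mulmx_rowE dotv_suml; apply: eq_bigr => i _.
by rewrite dotvZl data_matrix_row dotvZl.
Qed.

Lemma margin_wstar i : gamma <= y i * dotv (x i) wstar.
Proof. by have [_ _ _ <- _] := data; exact: minmargin_le. Qed.

Lemma simplex_margin_wstar q : simplex q -> gamma <= dotv (q *m A) wstar.
Proof.
move=> [q0 q1]; rewrite dotv_data_matrix -[gamma]mul1r -q1 mulr_suml.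
by apply: ler_sum => i _; rewrite ler_wpM2l // margin_wstar.
Qed.

End Data.

Lemma delta_simplex (R : realType) n (i : 'I_n) : simplex (delta_mx 0 i : 'rV[R]_n).
Proof.
split=> [j|]; first by rewrite mxE ler0n.
rewrite (bigD1 i) //= big1 => [|j /negbTE ji]; last by rewrite mxE ji andbF.
by rewrite mxE !eqxx addr0.
Qed.

Section Margin.
Variables (R : realType) (n d : nat) (x : 'I_n -> 'rV[R]_d) (y : 'I_n -> R).
Variables (wstar : 'rV[R]_d) (gamma : R) (T : nat).
Variables (w : nat -> 'rV[R]_d) (p : nat -> 'rV[R]_n).
Hypotheses (n_gt0 : (0 < n)%N) (data : data_ok x y wstar gamma) (T_gt0 : (0 < T)%N).
Hypothesis dyn : game_dynamics (data_matrix x y) T w p.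

Local Notation A := (data_matrix x y).
Local Notation u := (fun j => p j *m A).
Local Notation wb := (wbar T w).

Lemma gamma_gt0 : 0 < gamma.
Proof. by case: data. Qed.

Lemma dynamics_margin_wstar j : (j <= T)%N -> gamma <= dotv (u j) wstar.
Proof.
by move=> jT; apply: (simplex_margin_wstar data); exact: (dynamics_simplex n_gt0 dyn jT).
Qed.

Lemma wsum_wstar k : (k <= T)%N -> gamma * triangular R k <= dotv (wsum u k) wstar.
Proof.
move=> kT; rewrite /wsum dotv_suml -sum_natr_triangular mulr_sumr.
apply: ler_sum_nat => j /andP[_ jk]; rewrite dotvZl mulrC ler_wpM2l //.
by apply: dynamics_margin_wstar; apply: leq_trans kT; rewrite -ltnS.
Qed.

Lemma leader_wstar t : (0 < t <= T)%N -> gamma <= dotv (w t) wstar.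
Proof.
move=> tT; rewrite (dynamics_leader dyn tT); case: t tT => // k /andP[_ kT].
rewrite /optimistic_leader dotvZl dotvDl dotvZl ler_pdivlMl ?triangular_gt0 //=.
have kT' := ltnW kT.
rewrite triangularS mulrDl [_ * gamma]mulrC lerD ?wsum_wstar //.
by rewrite ler_wpM2l ?dynamics_margin_wstar.
Qed.

Lemma wbar_wstar : gamma <= dotv wb wstar.
Proof.
rewrite wbarE dotvZl ler_pdivlMl ?triangular_gt0 // /wsum dotv_suml.
rewrite -sum_natr_triangular mulr_suml; apply: ler_sum_nat => t /andP[t1 tT].
by rewrite dotvZl ler_wpM2l // leader_wstar // t1 -ltnS.
Qed.

Lemma wbar_norm_ge : gamma <= norm2 wb.
Proof. by apply: le_trans wbar_wstar _; rewrite dotvC dotv_le_norm2 //; case: data. Qed.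

Lemma inf_loss_w_le :
  inf (range (fun w' : 'rV[R]_d => \sum_(1 <= t < T.+1) t%:R * (- gpay A w' (p t))))
  <= - (triangular R T * (gamma ^+ 2 / 2)).
Proof.
apply: le_trans (_ : _ <= \sum_(1 <= t < T.+1) t%:R * (- gpay A (gamma *: wstar) (p t))) _.
  apply: ge_inf; last by exists (gamma *: wstar).
  by exists (- leader_value A p T) => _ [w' _ <-]; exact: cumulative_loss_w_lb.
have wstar1 : dotv wstar wstar = 1 by case: data => _ _ w1 _ _; rewrite -norm2_sqr w1 expr1n.
rewrite -sum_natr_triangular mulr_suml -sumrN; apply: ler_sum_nat => t /andP[_ tT].
rewrite gpayE dotvZr dotvZl dotvZr wstar1 -[X in _ <= X]mulrN ler_wpM2l // mulr1 opprB lerBlDr.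
have := dynamics_margin_wstar tT; have := gamma_gt0; nra.
Qed.

Lemma inf_loss_p_le i :
  inf [set \sum_(1 <= t < T.+1) t%:R * gpay A (w t) p' | p' in @simplex R n]
  <= triangular R T * (y i * dotv (x i) wb)
     - 2^-1 * \sum_(1 <= t < T.+1) t%:R * dotv (w t) (w t).
Proof.
apply: le_trans (_ : _ <= \sum_(1 <= t < T.+1) t%:R * gpay A (w t) (delta_mx 0 i)) _.
  apply: ge_inf; last by exists (delta_mx 0 i) => //; exact: delta_simplex.
  by eexists => _ [q sq <-]; exact: (cumulative_loss_p_lb n_gt0 dyn).
rewrite wbarE dotvZr mulrCA mulVKf ?gt_eqF ?triangular_gt0 //.
rewrite /wsum dotv_sumr mulr_sumr mulr_sumr -sumrB le_eqVlt; apply/orP; left; apply/eqP.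
apply: eq_bigr => t _.
by rewrite gpayE -rowE data_matrix_row dotvZl dotvZr dotvC; ring.
Qed.

Lemma wbar_sqr_le : triangular R T * dotv wb wb <= \sum_(1 <= t < T.+1) t%:R * dotv (w t) (w t).
Proof.
have S0 := triangular_gt0 R T_gt0.
have wsumE : wsum w T = triangular R T *: wb by rewrite wbarE scalerA divff ?gt_eqF // scale1r.
have cross : \sum_(1 <= t < T.+1) t%:R * (2 * dotv (w t) wb) = 2 * (triangular R T * dotv wb wb).
  rewrite -dotvZl -wsumE dotv_suml mulr_sumr.
  by apply: eq_bigr => t _; rewrite dotvZl mulrCA.
have split : \sum_(1 <= t < T.+1) t%:R * (dotv (w t) (w t) + dotv wb wb)
    = \sum_(1 <= t < T.+1) t%:R * dotv (w t) (w t) + triangular R T * dotv wb wb.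
  by rewrite -sum_natr_triangular mulr_suml -big_split; apply: eq_bigr => t _; rewrite mulrDr.
have : \sum_(1 <= t < T.+1) t%:R * (2 * dotv (w t) wb)
    <= \sum_(1 <= t < T.+1) t%:R * (dotv (w t) (w t) + dotv wb wb).
  by apply: ler_sum => t _; rewrite ler_wpM2l // mulr2_dotv_le.
by rewrite cross split; lra.
Qed.

(* The two regret bounds sum to [4 ln n]; the best response of the w-player is worth at
   least that of [gamma wstar], the best response of the p-player at most that of the
   pure strategy [i]. *)
Lemma margin_wbar_lb i :
  gamma ^+ 2 / 2 + 2^-1 * dotv wb wb - 4 * ln n%:R / triangular R T <= y i * dotv (x i) wb.
Proof.
have S0 := triangular_gt0 R T_gt0.
have hw := regret_w_le_path_len dyn T_gt0 (data_matrix_row_norm data).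
have hp := regret_p_le n_gt0 dyn.
have PL0 := path_len_ge0 T p.
have := inf_loss_w_le; have := inf_loss_p_le i; have := wbar_sqr_le.
have played : \sum_(1 <= t < T.+1) t%:R * (- gpay A (w t) (p t))
    = - \sum_(1 <= t < T.+1) t%:R * gpay A (w t) (p t).
  by rewrite -sumrN; apply: eq_bigr => t _; rewrite mulrN.
rewrite /regret_w /regret_p played in hw hp => Jensen inf_p inf_w.
have cancel : triangular R T * (4 * ln n%:R / triangular R T) = 4 * ln n%:R.
  by rewrite mulrC divfK ?gt_eqF.
rewrite -(ler_pM2l S0); lra.
Qed.

Lemma wbar_margin_ge0 i : 4 * Num.sqrt (ln n%:R) / gamma <= T%:R -> 0 <= y i * dotv (x i) wb.
Proof.
move=> T_large; have g0 := gamma_gt0.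
have lnn0 : 0 <= ln (n%:R : R) by rewrite ln_ge0 // ler1n.
have := margin_wbar_lb i; have := dotv_ge0 wb.
suff : 4 * ln n%:R / triangular R T <= gamma ^+ 2 / 2 by lra.
rewrite ler_pdivrMr // mulrC in T_large.
have s0 := sqrtr_ge0 (ln (n%:R : R)); have ss := sqr_sqrtr lnn0.
have sq : 16 * ln (n%:R : R) <= (T%:R * gamma) ^+ 2 by rewrite -ss; nra.
rewrite ler_pdivrMr ?triangular_gt0 // /triangular -natr1.
have T0 : 0 <= T%:R :> R by exact: ler0n.
nra.
Qed.

End Margin.

Section AcceleratedPerceptron.
Variables (R : realType) (n d : nat) (x : 'I_n -> 'rV[R]_d) (y : 'I_n -> R) (T : nat).
Variables (v : nat -> 'rV[R]_d) (q : nat -> 'rV[R]_n) (g : nat -> 'rV[R]_d).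
Hypotheses (n_gt0 : (0 < n)%N) (acc : accel_perceptron x y T v q g).

Local Notation A := (data_matrix x y).
Local Notation u := (fun j => q j *m A).
Local Notation play := (optimistic_leader u).

Lemma perceptron_state k : (k <= T)%N ->
  v k = 4^-1 *: wsum play k /\ g k = - (k.+1%:R^-1 *: wsum u k).
Proof.
elim: k => [_|k IH kT]; first by case: acc => _ -> -> _; rewrite !wsum0 !scaler0 oppr0.
have [IHv IHg] := IH (ltnW kT).
case: acc => _ _ _ /(_ k.+1); rewrite kT => /(_ isT) [-> _ ->] /=.
rewrite !wsumS IHv IHg /optimistic_leader /=.
have k0 : 0 <= k%:R :> R by exact: ler0n.
by split; apply/rowP => j; rewrite !mxE /triangular; field; apply/andP; split;
   apply: lt0r_neq0; lra.
Qed.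

Lemma mulmx_data_matrix_tr v' i : (v' *m A^T) ord0 i = y i * dotv v' (x i).
Proof. by rewrite !mxE /dotv mulr_sumr; apply: eq_bigr => k _; rewrite !mxE mulrCA. Qed.

Lemma qexp_softmax v' : qexp x y v' = softmax (v' *m A^T).
Proof.
apply/rowP => i; rewrite [LHS]mxE [RHS]mxE mulmx_data_matrix_tr mulNr.
by congr (_ / _); apply: eq_bigr => j _; rewrite mulmx_data_matrix_tr mulNr.
Qed.

Lemma perceptron_game_dynamics : game_dynamics A T play q.
Proof.
split=> [|t /andP[]]; first by case: acc.
case: t => // k _ kT; have [v_k _] := perceptron_state kT.
have q_k : q k.+1 = softmax (4^-1 *: \sum_(1 <= s < k.+2) s%:R *: (play s *m A^T)).
  case: acc => _ _ _ /(_ k.+1); rewrite kT => /(_ isT) [_ -> _].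
  rewrite qexp_softmax v_k /wsum -scalemxAl mulmx_suml.
  by congr (softmax (_ *: _)); apply: eq_bigr => s _; rewrite scalemxAl.
split.
- move=> w'; rewrite !obj_wE /optimistic_leader /=.
  by apply: quadratic_min; exact: triangular_gt0.
- by rewrite q_k; exact: softmax_simplex.
- by rewrite q_k; apply: (softmax_minimizes n_gt0 (fun p _ => obj_pE A play k.+1 p)).
Qed.

End AcceleratedPerceptron.

Lemma margin_ratio_lb (R : realType) (gamma r e : R) : 0 < gamma -> gamma <= r -> 0 <= e ->
  gamma - e / gamma <= (gamma ^+ 2 / 2 + 2^-1 * r ^+ 2 - e) / r.
Proof.
move=> g0 gr e0; have r0 : 0 < r by apply: lt_le_trans gr.
rewrite ler_pdivlMr // -subr_ge0.
have -> : (gamma ^+ 2 / 2 + 2^-1 * r ^+ 2 - e) - (gamma - e / gamma) * r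
    = (gamma / 2 * (gamma - r) ^+ 2 + e * (r - gamma)) / gamma.
  by field; exact: lt0r_neq0.
apply: divr_ge0 (ltW g0); apply: addr_ge0; apply: mulr_ge0 => //.
- by rewrite divr_ge0 ?ltW.
- exact: sqr_ge0.
- by rewrite subr_ge0.
Qed.

Section PerceptronMargin.
Variables (R : realType) (n d : nat) (x : 'I_n -> 'rV[R]_d) (y : 'I_n -> R).
Variables (wstar : 'rV[R]_d) (gamma : R) (T : nat).
Variables (v : nat -> 'rV[R]_d) (q : nat -> 'rV[R]_n) (g : nat -> 'rV[R]_d).
Hypotheses (n_gt0 : (0 < n)%N) (data : data_ok x y wstar gamma) (T_gt0 : (0 < T)%N).
Hypothesis acc : accel_perceptron x y T v q g.

Local Notation play := (optimistic_leader (fun j => q j *m data_matrix x y)).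

Lemma perceptron_nmargin :
  gamma - 8 * ln n%:R / (gamma * T%:R * T.+1%:R) <= nmargin x y (v T).
Proof.
have dyn := perceptron_game_dynamics n_gt0 acc.
have S0 := triangular_gt0 R T_gt0.
set wb := wbar T play; set c := 4^-1 * triangular R T; set e := 4 * ln n%:R / triangular R T.
have c0 : 0 < c by rewrite mulr_gt0.
have vT : v T = c *: wb.
  have [-> _] := perceptron_state acc (leqnn T).
  by rewrite /wb wbarE scalerA /c -mulrA divff ?gt_eqF // mulr1.
have scale i : y i * dotv (x i) (v T) = c * (y i * dotv (x i) wb).
  by rewrite vT dotvZr mulrCA.
have margin_lb : c * (gamma ^+ 2 / 2 + 2^-1 * dotv wb wb - e) <= minmargin x y (v T).
  pose i0 := Ordinal n_gt0.
  apply: lb_le_inf; first by exists (y i0 * dotv (x i0) (v T)); exists i0.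
  move=> _ [i _ <-]; rewrite scale ler_pM2l //.
  exact: margin_wbar_lb n_gt0 data T_gt0 dyn i.
have -> : 8 * ln n%:R / (gamma * T%:R * T.+1%:R) = e / gamma.
  rewrite /e /triangular; field.
  by rewrite !gt_eqF ?ltr0n ?(gamma_gt0 data).
have r_ge := wbar_norm_ge n_gt0 data T_gt0 dyn.
have e0 : 0 <= e by rewrite divr_ge0 ?mulr_ge0 ?ln_ge0 ?ler1n // ltW.
apply: le_trans (margin_ratio_lb (gamma_gt0 data) r_ge e0) _.
have r0 : 0 < norm2 wb := lt_le_trans (gamma_gt0 data) r_ge.
rewrite norm2_sqr /nmargin -/wb [in norm2 (v T)]vT (norm2Z _ (ltW c0)).
rewrite ler_pdivlMr; last exact: mulr_gt0 c0 r0.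
apply: le_trans margin_lb; rewrite le_eqVlt; apply/orP; left; apply/eqP.
by field; exact: lt0r_neq0.
Qed.

End PerceptronMargin.

Theorem theorem4 (R : realType) :
  (* regret bounds *)
  (forall (n d : nat) (x : 'I_n -> 'rV[R]_d) (y : 'I_n -> R) (wstar : 'rV[R]_d)
          (gamma : R) (T : nat) (w : nat -> 'rV[R]_d) (p : nat -> 'rV[R]_n),
     (0 < n)%N -> data_ok x y wstar gamma -> (0 < T)%N ->
     game_dynamics (data_matrix x y) T w p ->
     regret_w (data_matrix x y) T w p <= 2 * path_len T p /\
     regret_p (data_matrix x y) T w p <= 4 * ln (n%:R : R) - 2 * path_len T p) /\
  (* non-negative margin of the averaged iterate after O(sqrt(log n)/gamma) rounds *)
  (exists C : R, 0 < C /\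
    forall (n d : nat) (x : 'I_n -> 'rV[R]_d) (y : 'I_n -> R) (wstar : 'rV[R]_d)
           (gamma : R) (T : nat) (w : nat -> 'rV[R]_d) (p : nat -> 'rV[R]_n),
      (0 < n)%N -> data_ok x y wstar gamma -> (0 < T)%N ->
      game_dynamics (data_matrix x y) T w p ->
      C * Num.sqrt (ln (n%:R : R)) / gamma <= T%:R ->
      forall i : 'I_n, 0 <= y i * dotv (x i) (wbar T w)) /\
  (* normalized margin of the Accelerated Perceptron *)
  (exists c : R, 0 < c /\
    forall (n d : nat) (x : 'I_n -> 'rV[R]_d) (y : 'I_n -> R) (wstar : 'rV[R]_d)
           (gamma : R) (T : nat) (v : nat -> 'rV[R]_d) (q : nat -> 'rV[R]_n)
           (g : nat -> 'rV[R]_d),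
      (0 < n)%N -> data_ok x y wstar gamma -> (0 < T)%N ->
      accel_perceptron x y T v q g ->
      c * (gamma - 8 * ln (n%:R : R) / (gamma * T%:R * T.+1%:R)) <= nmargin x y (v T)).
Proof.
split; [|split].
- move=> n d x y wstar gamma T w p n_gt0 data T_gt0 dyn; split; last exact: regret_p_le.
  have := regret_w_le_path_len dyn T_gt0 (data_matrix_row_norm data).
  by have := path_len_ge0 T p; lra.
- exists 4; split=> // n d x y wstar gamma T w p n_gt0 data T_gt0 dyn T_large i.
  exact: wbar_margin_ge0 n_gt0 data T_gt0 dyn i T_large.
- exists 1; split=> // n d x y wstar gamma T v q g n_gt0 data T_gt0 acc.
  by rewrite mul1r; exact: perceptron_nmargin n_gt0 data T_gt0 acc.
Qed.
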